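(* Let $n\ge 3$ and $f=x^n+a_{n-1}x^{n-1}+\cdots+a_0\in\mathbb{C}[x]$ with roots $r_1,\ldots,r_n$ (with multiplicity). Define the polynomials \[f_1(x,y)=\frac{f(y)-f(x)}{y-x},\qquad f_2(x,y)=\frac{f\left(\frac{x+y}{2}\right)-f(x)}{\frac{y-x}{2}}.\] Let $D_1=\prod_{1\le i<j\le n}(r_i-r_j)^2$ and $D_2=\prod_{1\le i,j,k\le n,\ i<j,\ j\ne k,\ k\ne i}(2r_k-r_i-r_j)$. Then $\operatorname{res}(f,\operatorname{res}(f_1,f_2,y),x)=0$ if and only if $D_1D_2=0$.
   Context: The quotients defining $f_1,f_2$ are polynomials in $x,y$. $\operatorname{res}(\cdot,\cdot,y)$ denotes the Sylvester resultant with respect to $y$ (and similarly for $x$). *)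

From HB Require Import structures.
From mathcomp Require Import all_boot all_order all_algebra.
Set Implicit Arguments. Unset Strict Implicit. Unset Printing Implicit Defensive.
Import Order.TTheory GRing.Theory Num.Theory.
Local Open Scope ring_scope.

(* Bivariate polynomials are elements of {poly {poly C}}: the inner variable
   ('X of {poly C}) is x, the outer variable ('X of {poly {poly C}}) is y. *)

Section Bivariate.
Variable C : numClosedFieldType.

Definition varx : {poly {poly C}} := ('X : {poly C})%:P.
Definition vary : {poly {poly C}} := 'X.

Definition f_of_y (f : {poly C}) : {poly {poly C}} := f ^:P.
Definition f_of_x (f : {poly C}) : {poly {poly C}} := f%:P.

Definition cst2 (c : C) : {poly {poly C}} := c%:P%:P.

Definition f1 (f : {poly C}) : {poly {poly C}} :=
  (f_of_y f - f_of_x f) %/ (vary - varx).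

Definition f2 (f : {poly C}) : {poly {poly C}} :=
  ((f_of_y f) \Po ((varx + vary) * cst2 (2^-1)) - f_of_x f)
    %/ ((vary - varx) * cst2 (2^-1)).

Definition D1 (n : nat) (r : 'I_n -> C) : C :=
  \prod_(i < n) \prod_(j < n | (i < j)%N) (r i - r j) ^+ 2.

Definition D2 (n : nat) (r : 'I_n -> C) : C :=
  \prod_(i < n) \prod_(j < n | (i < j)%N) \prod_(k < n | (j != k) && (k != i))
    (2 * r k - r i - r j).

End Bivariate.

(* Since f is monic with roots r_i, res(f, R) vanishes iff R(r_i) = 0 for some i,
   where R = res_y(f1, f2).  The leading coefficients of f1 and f2 in y are
   nonzero constants, so R(r_i) is the resultant of the specialisations
     f1(r_i, y) = prod_(j <> i) (y - r_j),
     f2(r_i, y) = prod_(k <> i) (y - (2 r_k - r_i)) / 2.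
   These have a common root iff r_i + r_j = 2 r_k for some j, k <> i, i.e. iff
   r_i = r_j with i <> j (case k = j, a factor of D1 vanishes) or r_k is the
   midpoint of r_i and r_j with k distinct from both (a factor of D2 vanishes). *)

From HB Require Import structures.
From mathcomp Require Import all_boot all_order all_algebra.
From mathcomp Require Import ring.
Import Order.TTheory GRing.Theory Num.Theory.
Local Open Scope ring_scope.

Lemma resultant_eq0_root (C : closedFieldType) (p q : {poly C}) : p != 0 ->
  resultant p q = 0 <-> exists x, root p x && root q x.
Proof.
move=> p_neq0; have gcd_neq0 : gcdp p q != 0 by rewrite gcdp_eq0 negb_and p_neq0.
split=> [/eqP|[x pqx]]; last first.
  by apply/eqP; rewrite resultant_eq0 (@root_size_gt1 _ x) ?root_gcd.
by rewrite resultant_eq0 => /gtn_eqF/closed_rootP [x]; rewrite root_gcd; exists x.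
Qed.

Lemma root_prodP (R : idomainType) (I : finType) (P : pred I)
    (F : I -> {poly R}) x :
  reflect (exists2 i, P i & root (F i) x) (root (\prod_(i | P i) F i) x).
Proof. by rewrite rootE horner_prod; apply: prodf_eq0. Qed.

Lemma divp_XsubCMK (R : idomainType) (p : {poly R}) (a c : R) :
  c \is a GRing.unit -> root p a ->
  p %/ (('X - a%:P) * c%:P) * (('X - a%:P) * c%:P) = p.
Proof.
move=> c_unit /factor_theorem [q ->].
have -> : q * ('X - a%:P) = q * (c^-1)%:P * (('X - a%:P) * c%:P).
  by rewrite [_ * c%:P]mulrC !mulrA -(mulrA q) -polyCM mulVr // polyC1 mulr1.
rewrite Pdiv.IdomainUnit.mulpK //.
by rewrite lead_coefM lead_coefXsubC mul1r lead_coefC.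
Qed.

Lemma mulIf_prod_bigD1 (R : idomainType) (I : finType) (i : I) (F : I -> R) p :
  F i != 0 -> p * F i = \prod_k F k -> p = \prod_(k | k != i) F k.
Proof. by move=> Fi_neq0; rewrite (bigD1 i) //= [F i * _]mulrC; apply: mulIf. Qed.

Lemma prod_ltn_eq0 (R : idomainType) n (F : 'I_n -> 'I_n -> R) :
    (forall i j, F i j = F j i) ->
  \prod_(i < n) \prod_(j < n | (i < j)%N) F i j = 0 <->
  exists i j, i != j /\ F i j = 0.
Proof.
move=> F_sym; split.
  move/eqP/prodf_eq0 => [i _ /prodf_eq0 [j ij /eqP Fij]].
  by exists i, j; split=> //; apply: contraTneq ij => ->; rewrite ltnn.
case=> i [j [ij Fij]]; apply/eqP/prodf_eq0.
have [lt_ij|lt_ji|/val_inj eq_ij] := ltngtP i j; last by rewrite eq_ij eqxx in ij.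
  by exists i => //; apply/prodf_eq0; exists j; rewrite ?Fij.
by exists j => //; apply/prodf_eq0; exists i; rewrite // F_sym Fij.
Qed.

Lemma two_neq0 {R : numDomainType} : 2 != 0 :> R.
Proof. by rewrite pnatr_eq0. Qed.

Section DividedDifferences.
Variable C : numClosedFieldType.
Implicit Types (f : {poly C}) (a : C).
Local Notation h := (2^-1 : C).
Local Notation mid := ((varx C + vary C) * cst2 h).

Lemma half_unit : h \is a GRing.unit.
Proof. by rewrite unitfE invr_eq0 two_neq0. Qed.

Lemma half_add_half : h + h = 1.
Proof. by rewrite [RHS]splitr mul1r. Qed.

Lemma horner_f_of_y_X f : (f_of_y f).['X] = f.
Proof. exact: comp_polyXr. Qed.

Lemma horner_mid_X : mid.['X] = 'X.
Proof.
by rewrite hornerM hornerD hornerX !hornerC mulrDl -mulrDr -polyCD half_add_half mulr1.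
Qed.

Lemma f1_mul f : f1 f * (vary C - varx C) = f_of_y f - f_of_x f.
Proof.
have := @divp_XsubCMK _ (f_of_y f - f_of_x f) 'X 1 (unitr1 _).
rewrite polyC1 mulr1; apply.
by rewrite rootE hornerD hornerN horner_f_of_y_X hornerC subrr.
Qed.

Lemma f2_mul f :
  f2 f * ((vary C - varx C) * cst2 h) = f_of_y f \Po mid - f_of_x f.
Proof.
apply: divp_XsubCMK; first exact: rmorph_unit half_unit.
by rewrite rootE hornerD hornerN horner_comp horner_mid_X horner_f_of_y_X hornerC subrr.
Qed.

Lemma size_mid : size mid = 2.
Proof.
rewrite mulrC addrC mul_polyC size_scale ?size_XaddC //.
by rewrite polyC_eq0 invr_eq0 two_neq0.
Qed.

Lemma lead_coef_mid : lead_coef mid = h%:P.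
Proof. by rewrite lead_coefM addrC lead_coefXaddC mul1r lead_coefC. Qed.

Lemma size_f_of_x_lt_f_of_y f :
  (1 < size f)%N -> (size (- f_of_x f) < size (f_of_y f))%N.
Proof.
move=> f_gt1; rewrite size_polyN size_polyC size_map_polyC.
exact: leq_ltn_trans (leq_b1 _) f_gt1.
Qed.

Lemma lead_coef_f1 f : (1 < size f)%N -> lead_coef (f1 f) = (lead_coef f)%:P.
Proof.
move=> f_gt1; have := congr1 lead_coef (f1_mul f).
rewrite lead_coefM lead_coefXsubC mulr1 => ->.
by rewrite lead_coefDl ?size_f_of_x_lt_f_of_y // lead_coef_map.
Qed.

Lemma lead_coef_f2 f : (1 < size f)%N ->
  lead_coef (f2 f) = (lead_coef f * h ^+ (size f).-2)%:P.
Proof.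
move=> f_gt1; have := congr1 lead_coef (f2_mul f).
rewrite !lead_coefM lead_coefXsubC mul1r lead_coefC.
rewrite lead_coefDl ?size_comp_poly2 ?size_mid ?size_f_of_x_lt_f_of_y //.
rewrite lead_coef_comp ?size_mid // lead_coef_mid lead_coef_map size_map_polyC.
have -> : (size f).-1 = (size f).-2.+1 by rewrite prednK // ltn_predRL.
move=> lead_f2E; apply: (@mulIf _ h%:P); first by rewrite polyC_eq0 invr_eq0 two_neq0.
by rewrite lead_f2E /= polyCM rmorphXn exprSr mulrA.
Qed.

Section Specialization.
Variable a : C.
Local Notation eval_x := (map_poly (horner_eval a)).

Lemma eval_x_f_of_y f : eval_x (f_of_y f) = f.
Proof.
rewrite /f_of_y -map_poly_comp (eq_map_poly (g := id)) ?map_poly_id // => c.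
by rewrite /= horner_evalE hornerC.
Qed.

Lemma eval_x_varx : eval_x (varx C) = a%:P.
Proof. by rewrite map_polyC /= horner_evalE hornerX. Qed.

Lemma eval_x_vary : eval_x (vary C) = 'X.
Proof. exact: map_polyX. Qed.

Lemma eval_x_cst2 c : eval_x (cst2 c) = c%:P.
Proof. by rewrite map_polyC /= horner_evalE hornerC. Qed.

Lemma f1_eval_x f : eval_x (f1 f) * ('X - a%:P) = f - (f.[a])%:P.
Proof.
have := congr1 eval_x (f1_mul f).
by rewrite rmorphM !rmorphB /= eval_x_vary eval_x_varx eval_x_f_of_y map_polyC.
Qed.

Lemma f2_eval_x f :
  eval_x (f2 f) * (('X - a%:P) * h%:P) = f \Po ((a%:P + 'X) * h%:P) - (f.[a])%:P.
Proof.
have := congr1 eval_x (f2_mul f).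
rewrite !rmorphM !rmorphB /= map_comp_poly rmorphM rmorphD /=.
by rewrite eval_x_vary eval_x_varx eval_x_cst2 eval_x_f_of_y map_polyC.
Qed.

Lemma resultant_f1_f2_eval_x f : (1 < size f)%N ->
  (resultant (f1 f) (f2 f)).[a] = resultant (eval_x (f1 f)) (eval_x (f2 f)).
Proof.
move=> f_gt1; have lf_neq0 : lead_coef f != 0.
  by rewrite lead_coef_eq0 -size_poly_gt0 ltnW.
rewrite -horner_evalE; apply: map_resultant; rewrite /= horner_evalE.
  by rewrite lead_coef_f1 // hornerC.
by rewrite lead_coef_f2 // hornerC mulf_neq0 // expf_neq0 // invr_eq0 two_neq0.
Qed.

End Specialization.
End DividedDifferences.

Lemma midpoint_subE (R : comNzRingType) (a b x u : R) : u * 2 = 1 ->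
  (a + x) * u - b = (x - (2 * b - a)) * u.
Proof.
by move=> u2; transitivity ((a + x) * u - b * (u * 2)); [rewrite u2 mulr1 | ring].
Qed.

Section SpecializationAtRoot.
Variables (C : numClosedFieldType) (n : nat) (r : 'I_n -> C) (i : 'I_n).
Local Notation f := (\prod_(k < n) ('X - (r k)%:P)).
Local Notation h := (2^-1 : C).
Local Notation eval_x := (map_poly (horner_eval (r i))).

Lemma root_prod_XsubC_ord : root f (r i).
Proof. by apply/root_prodP; exists i; rewrite ?root_XsubC. Qed.

Lemma f1_eval_root : eval_x (f1 f) = \prod_(j | j != i) ('X - (r j)%:P).
Proof.
apply: mulIf_prod_bigD1; first by rewrite polyXsubC_eq0.
by rewrite f1_eval_x (rootP root_prod_XsubC_ord) subr0.
Qed.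

Lemma f2_eval_root :
  eval_x (f2 f) = \prod_(k | k != i) (('X - (2 * r k - r i)%:P) * h%:P).
Proof.
have mid_subE k : ((r i)%:P + 'X) * h%:P - (r k)%:P = ('X - (2 * r k - r i)%:P) * h%:P.
  rewrite polyCB polyCM polyC_natr midpoint_subE //.
  by rewrite -polyC_natr -polyCM mulVf ?two_neq0.
apply: mulIf_prod_bigD1.
  by rewrite mulf_neq0 ?polyXsubC_eq0 // polyC_eq0 invr_eq0 two_neq0.
rewrite (_ : 2 * r i - r i = r i); last by rewrite mulr_natl mulr2n addrK.
rewrite f2_eval_x (rootP root_prod_XsubC_ord) subr0 rmorph_prod.
by apply: eq_bigr => k _; rewrite /= comp_polyB comp_polyX comp_polyC mid_subE.
Qed.

Lemma resultant_f1_f2_root_eq0 : (resultant (f1 f) (f2 f)).[r i] = 0 <->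
  exists j k, [/\ j != i, k != i & r i + r j = 2 * r k].
Proof.
have f_neq0 : f != 0 by rewrite monic_neq0 ?monic_prod_XsubC.
rewrite resultant_f1_f2_eval_x ?(root_size_gt1 f_neq0 root_prod_XsubC_ord) //.
rewrite f1_eval_root f2_eval_root resultant_eq0_root ?monic_neq0 ?monic_prod_XsubC //.
have root_factor k x : root (('X - (2 * r k - r i)%:P) * h%:P) x = (x == 2 * r k - r i).
  by rewrite rootM rootC invr_eq0 (negPf two_neq0) orbF root_XsubC.
split=> [[x /andP[/root_prodP [j ji]]]|[j [k [ji ki rijk]]]].
  rewrite root_XsubC => /eqP-> /root_prodP [k ki]; rewrite root_factor => /eqP rj.
  by exists j, k; split=> //; rewrite rj addrC subrK.
exists (r j); apply/andP; split; apply/root_prodP.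
  by exists j; rewrite ?root_XsubC.
by exists k; rewrite // root_factor -rijk [r i + _]addrC addrK.
Qed.
End SpecializationAtRoot.

Section Discriminants.
Variables (C : numClosedFieldType) (n : nat) (r : 'I_n -> C).

Lemma D1_eq0 : D1 r = 0 <-> exists i j, i != j /\ r i = r j.
Proof.
rewrite /D1 prod_ltn_eq0 => [|i j]; last by rewrite -opprB sqrrN.
split=> -[i [j [ij Fij]]]; exists i, j; split=> //.
  by move/eqP: Fij; rewrite sqrf_eq0 subr_eq0 => /eqP.
by rewrite Fij subrr expr0n.
Qed.

Lemma D2_eq0 : D2 r = 0 <->
  exists i j k, [/\ i != j, k != i, k != j & r i + r j = 2 * r k].
Proof.
have midE i j k : (2 * r k - r i - r j == 0) = (r i + r j == 2 * r k).
  by rewrite -addrA -opprD subr_eq0 eq_sym.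
rewrite /D2 prod_ltn_eq0 => [|i j]; last first.
  apply: eq_big => [k|k _]; first by rewrite andbC (eq_sym k i) (eq_sym j k).
  by rewrite -!addrA [- _ - _]addrC.
split=> [[i [j [ij /eqP/prodf_eq0 [k /andP[jk ki]]]]]|].
  by rewrite midE => /eqP e; exists i, j, k; split; rewrite // eq_sym.
case=> i [j [k [ij ki kj e]]].
exists i, j; split=> //; apply/eqP/prodf_eq0; exists k; rewrite ?midE ?e //.
by rewrite eq_sym kj ki.
Qed.

Lemma D1_D2_eq0 : D1 r * D2 r = 0 <->
  exists i j k, [/\ j != i, k != i & r i + r j = 2 * r k].
Proof.
transitivity (D1 r = 0 \/ D2 r = 0).
  split=> [/eqP|[]->]; rewrite ?mul0r ?mulr0 //.
  by rewrite mulf_eq0 => /orP[]/eqP; [left|right].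
rewrite D1_eq0 D2_eq0; split.
  case=> [[i [j [ij rij]]]|[i [j [k [ij ki kj e]]]]].
    by exists i, j, j; rewrite eq_sym rij mulr_natl mulr2n.
  by exists i, j, k; rewrite eq_sym.
case=> i [j [k [ji ki e]]]; have [kj|kj] := eqVneq k j.
  left; exists i, j; split; first by rewrite eq_sym.
  by apply: (@addIr _ (r j)); rewrite e kj mulr_natl mulr2n.
by right; exists i, j, k; rewrite eq_sym.
Qed.
End Discriminants.

Theorem proposition4 (C : numClosedFieldType) (n : nat) (f : {poly C})
    (r : 'I_n -> C) :
  (3 <= n)%N ->
  f = \prod_(i < n) ('X - (r i)%:P) ->
  resultant f (resultant (f1 f) (f2 f)) = 0 <-> D1 r * D2 r = 0.
Proof.
move=> _ ->.
have f_neq0 : \prod_(k < n) ('X - (r k)%:P) != 0 :> {poly C}.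
  by rewrite monic_neq0 ?monic_prod_XsubC.
rewrite D1_D2_eq0 resultant_eq0_root //.
split=> [[x /andP[/root_prodP [i _]]]|[i [j [k rijk]]]].
  rewrite root_XsubC => /eqP-> /rootP /resultant_f1_f2_root_eq0 [j [k rijk]].
  by exists i, j, k.
exists (r i); rewrite root_prod_XsubC_ord; apply/rootP/resultant_f1_f2_root_eq0.
by exists j, k.
Qed.
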